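(* Let $n\ge1$, let $p$ be a prime, and let $L(\mathbf{X})=\sum_{i,j=1}^n a_{ij}x_{ij}\in\mathbb{F}_p[\mathbf{X}]$ be a nontrivial (not identically zero) linear form in the $n^2$ variables $\mathbf{X}=(x_{ij})_{i,j=1}^n$. Then \[ S_p(L)=\sum_{\substack{\mathbf{X}\in\mathbb{F}_p^{n\times n}\\ \det\mathbf{X}=0}}\exp\left(2\pi i\,L(\mathbf{X})/p\right)\ll p^{n^2-(n+1)/2}, \] where the implied constant depends only on $n$.
   Context: Here $L(\mathbf{X})\in\mathbb{F}_p$ is identified with an integer in $\{0,\dots,p-1\}$ in the exponential. *)

From HB Require Import structures.
From mathcomp Require Import all_boot all_order all_algebra.
From mathcomp Require Import all_classical all_reals all_analysis.
Set Implicit Arguments. Unset Strict Implicit. Unset Printing Implicit Defensive.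
Import Order.TTheory GRing.Theory Num.Theory.
Local Open Scope ring_scope.

Definition linform (p n : nat) (a X : 'M['F_p]_n) : 'F_p :=
  \sum_(i < n) \sum_(j < n) a i j * X i j.

(* Real and imaginary parts of
   S_p(L) = \sum_{X in F_p^{n x n}, det X = 0} exp(2 pi i L(X) / p),
   where L(X) in F_p is identified with its representative in {0,..,p-1}. *)
Definition angle (R : realType) (p n : nat) (a X : 'M['F_p]_n) : R :=
  2 * pi * (nat_of_ord (linform a X))%:R / p%:R.

Definition Sp_re (R : realType) (p n : nat) (a : 'M['F_p]_n) : R :=
  \sum_(X : 'M['F_p]_n | \det X == 0) cos (angle R a X).

Definition Sp_im (R : realType) (p n : nat) (a : 'M['F_p]_n) : R :=
  \sum_(X : 'M['F_p]_n | \det X == 0) sin (angle R a X).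

Definition Sp_abs (R : realType) (p n : nat) (a : 'M['F_p]_n) : R :=
  Num.sqrt (Sp_re R a ^+ 2 + Sp_im R a ^+ 2).

From HB Require Import structures.
From mathcomp Require Import all_boot all_order all_algebra.
From mathcomp Require Import all_classical all_reals all_analysis.
From mathcomp Require Import complex ring.
Import Order.TTheory GRing.Theory Num.Theory.
Local Open Scope ring_scope.

Set Implicit Arguments.
Unset Strict Implicit.
Unset Printing Implicit Defensive.

(* Expand the determinant along a row i0 on which the form L is nonzero.  With
   the other rows Y fixed, det X = x . c(Y) is linear in the i0-th row x, and
   L(X) is a constant plus a nonzero linear form in x, so the sum over x is a
   character sum over the hyperplane c(Y)^perp.  It vanishes unless
   c(Y)^perp is contained in the kernel of that linear form, and then every
   row of Y other than the i0-th lies in this kernel, being orthogonal to the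
   cofactor vector c(Y).  Counting such Y gives |S_p(L)| <= p^(n(n-1)), which
   is at most p^(n^2-(n+1)/2). *)

Lemma sum_shift_eq0 (V : finZmodType) (K : idomainType) (P : pred V)
    (f : V -> K) (d : V) (c : K) :
  c != 1 -> (forall x, P (x + d) = P x) -> (forall x, f (x + d) = c * f x) ->
  \sum_(x | P x) f x = 0.
Proof.
move=> c_neq1 Pd fd; set S := \sum_(x | P x) f x.
have S_eq : S = c * S.
  rewrite /S mulr_sumr (reindex_inj (addIr d)) /=.
  by apply: eq_big => x; rewrite ?Pd ?fd.
have : (c - 1) * S = 0 by rewrite mulrBl mul1r -S_eq subrr.
by move/eqP; rewrite mulf_eq0 subr_eq0 (negbTE c_neq1) => /eqP.
Qed.

Lemma card_mx_rows (T : finType) m n (A : 'I_m -> pred 'rV[T]_n) :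
  #|[pred Y : 'M[T]_(m, n) | [forall k, row k Y \in A k]]| = (\prod_k #|A k|)%N.
Proof.
pose mx_of (f : {ffun 'I_m -> 'rV[T]_n}) : 'M[T]_(m, n) := \matrix_(k, j) f k 0 j.
have row_mx_of f k : row k (mx_of f) = f k by apply/rowP => j; rewrite !mxE.
have prod_in Y :
    [forall k, row k Y \in A k] = (\prod_k (row k Y \in A k))%N :> nat.
  case: (boolP [forall k, _]) => [/forallP inA | /forallPn[k /negbTE k_notin]].
    by rewrite big1 // => k _; rewrite inA.
  by rewrite (bigD1 k) //= k_notin.
rewrite -sum1_card big_mkcond /= (eq_bigr _ (fun Y _ => prod_in Y)).
rewrite (reindex mx_of) /=; last first.
  exists (fun Y => [ffun k => row k Y]) => [f _ | Y _].
    by apply/ffunP => k; rewrite ffunE row_mx_of.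
  by apply/matrixP => k j; rewrite !mxE ffunE mxE.
under eq_bigr do under eq_bigr do rewrite row_mx_of.
rewrite [RHS](eq_bigr (fun k => \sum_y (y \in A k) : nat)%N); last first.
  by move=> k _; rewrite -sum1_card big_mkcond.
by rewrite bigA_distr_bigA.
Qed.

Section SingularCharacterSum.

Variables (F : finFieldType) (K : numDomainType) (psi : F -> K) (t0 : F).
Hypothesis psiD : forall s t, psi (s + t) = psi s * psi t.
Hypothesis norm_psi : forall t, `|psi t| = 1.
Hypothesis psi_t0 : psi t0 != 1.
Variable n : nat.

Definition dotr (x y : 'rV[F]_n) : F := \sum_j x 0 j * y 0 j.

Lemma dotrDl x y c : dotr (x + y) c = dotr x c + dotr y c.
Proof. by rewrite -big_split; apply: eq_bigr => j _; rewrite mxE mulrDl. Qed.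

Lemma dotrZl s x c : dotr (s *: x) c = s * dotr x c.
Proof. by rewrite mulr_sumr; apply: eq_bigr => j _; rewrite mxE mulrA. Qed.

Definition mxdot (a X : 'M[F]_n) : F := \sum_i \sum_j a i j * X i j.

Definition orth (c : 'rV[F]_n) : pred 'rV[F]_n := [pred x | dotr x c == 0].

Definition orth_sum (al c : 'rV[F]_n) : K := \sum_(x in orth c) psi (dotr x al).

Lemma orth_sum_eq0 al c d : d \in orth c -> d \notin orth al -> orth_sum al c = 0.
Proof.
rewrite !inE => /eqP dc0 dal_neq0.
(* Translating by the multiple of d on which x . al increases by t0
   preserves c^perp and multiplies the sum by psi t0 <> 1. *)
apply: (@sum_shift_eq0 _ _ _ _ ((t0 / dotr d al) *: d) (psi t0)) => // x.
  by rewrite !inE dotrDl dotrZl dc0 mulr0 addr0.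
by rewrite dotrDl dotrZl divfK // psiD mulrC.
Qed.

Lemma norm_orth_sum_le al c :
  `|orth_sum al c| <= (#|orth al| * (orth c \subset orth al))%:R.
Proof.
have [c_al | /fintype.subsetPn[d dc dal]] := boolP (orth c \subset orth al).
  rewrite muln1; apply: le_trans (ler_norm_sum _ _ _) _.
  under eq_bigr do rewrite norm_psi.
  by rewrite sumr_const ler_nat (subset_leq_card c_al).
by rewrite (orth_sum_eq0 dc dal) normr0.
Qed.

Lemma card_orth al : al != 0 -> #|orth al| = (#|F| ^ n.-1)%N.
Proof.
move=> al_neq0; have [j alj_neq0] : exists j, al 0 j != 0.
  apply/existsP; apply: contraR al_neq0 => /existsPn al0.
  by apply/eqP/rowP => j; rewrite mxE; apply/eqP/negPn.
pose u : 'rV[F]_n := (al 0 j)^-1 *: delta_mx 0 j.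
have u_al : dotr u al = 1.
  rewrite /dotr (bigD1 j) //= big1 ?addr0 => [|k k_neq_j].
    by rewrite !mxE !eqxx mulr1 mulVf.
  by rewrite !mxE (negbTE k_neq_j) andbF mulr0 mul0r.
have fibre t : #|[pred x | dotr x al == t]| = #|orth al|.
  rewrite -!sum1_card (reindex_inj (addIr (t *: u))) /=.
  by apply: eq_bigl => x; rewrite !inE dotrDl dotrZl u_al mulr1 -subr_eq0 addrK.
have : (#|F| * #|orth al|)%N = (#|F| ^ n)%N.
  rewrite -[in RHS](mul1n n) -card_mx -sum_nat_const -[RHS]sum1_card.
  rewrite (partition_big (fun x => dotr x al) predT) //=.
  by apply: eq_bigr => t _; rewrite -(fibre t) -sum1_card.
have n_gt0 : (0 < n)%N by apply: leq_ltn_trans (ltn_ord j).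
rewrite -[in X in _ = X -> _](prednK n_gt0) expnS => /eqP.
by rewrite eqn_pmul2l ?(ltnW (card_finNzRing_gt1 F)) // => /eqP.
Qed.

Section RowExpansion.

Variable i0 : 'I_n.

Definition row_upd (Y : 'M[F]_n) (x : 'rV[F]_n) : 'M[F]_n :=
  \matrix_(k, j) (if k == i0 then x 0 j else Y k j).

Definition cofrow (Y : 'M[F]_n) : 'rV[F]_n := \row_j cofactor Y i0 j.

Lemma cofrow_row_upd Y x : cofrow (row_upd Y x) = cofrow Y.
Proof.
apply/rowP => j; rewrite !mxE /cofactor; congr (_ * \det _).
by apply/matrixP => k l; rewrite !mxE eq_sym (negbTE (neq_lift i0 k)).
Qed.

Lemma det_row_upd Y x : \det (row_upd Y x) = dotr x (cofrow Y).
Proof.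
rewrite (expand_det_row _ i0); apply: eq_bigr => j _.
by rewrite -(cofrow_row_upd Y x) !mxE eqxx.
Qed.

Lemma dotr_row_cofrow Y k : k != i0 -> dotr (row k Y) (cofrow Y) = 0.
Proof.
move=> k_neq_i0; rewrite -det_row_upd.
apply: (@determinant_alternate _ _ _ i0 k); first by rewrite eq_sym.
by move=> j; rewrite !mxE eqxx (negbTE k_neq_i0).
Qed.

Lemma mxdot_row_upd a Y x :
  mxdot a (row_upd Y x) = mxdot a (row_upd Y 0) + dotr x (row i0 a).
Proof.
rewrite /mxdot (bigD1 i0) //= [in RHS](bigD1 i0) //= addrAC; congr (_ + _).
  rewrite [X in _ = X + _]big1 ?add0r => [|j _]; last by rewrite !mxE eqxx mulr0.
  by apply: eq_bigr => j _; rewrite !mxE eqxx mulrC.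
apply: eq_bigr => k k_neq_i0; apply: eq_bigr => j _.
by rewrite !mxE (negbTE k_neq_i0).
Qed.

Lemma sum_row_upd (V : nmodType) (f : 'M[F]_n -> V) :
  \sum_Y \sum_x f (row_upd Y x) = (\sum_X f X) *+ (#|F| ^ n).
Proof.
have shift Y : \sum_x f (row_upd Y x) = \sum_x f (Y + row_upd 0 x).
  rewrite (reindex_inj (addIr (row i0 Y))) /=.
  apply: eq_bigr => x _; congr f; apply/matrixP => k j; rewrite !mxE.
  by case: eqP => [->|_]; rewrite ?addr0 // addrC.
under eq_bigr do rewrite shift.
rewrite exchange_big /= -[in X in _ *+ X](mul1n n) -card_mx -sumr_const.
by apply: eq_bigr => x _; rewrite [RHS](reindex_inj (addIr (row_upd 0 x))).
Qed.

Definition rows_orth (al : 'rV[F]_n) : pred 'M[F]_n :=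
  [pred Y | [forall k, (k != i0) ==> (row k Y \in orth al)]].

Lemma card_rows_orth al : #|rows_orth al| = (#|F| ^ n * #|orth al| ^ n.-1)%N.
Proof.
pose A k : pred 'rV[F]_n := [pred x | (k != i0) ==> (x \in orth al)].
rewrite (@card_mx_rows _ _ _ A) (bigD1 i0) //=; congr (_ * _)%N.
  by rewrite -[in RHS](mul1n n) -card_mx; apply: eq_card => x; rewrite !inE eqxx.
rewrite (eq_bigr (fun=> #|orth al|)) => [|k k_neq_i0]; last first.
  by apply: eq_card => x; rewrite !inE k_neq_i0.
by rewrite prod_nat_const cardC1 card_ord.
Qed.

Lemma norm_orth_sum_cofrow al Y :
  `|orth_sum al (cofrow Y)| <= (#|orth al| * (Y \in rows_orth al))%:R.
Proof.
apply: le_trans (norm_orth_sum_le _ _) _; rewrite ler_nat.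
have [/fintype.subsetP sub | _] := boolP (orth _ \subset _); last by rewrite muln0.
suff -> : Y \in rows_orth al by [].
apply/forallP => k; apply/implyP => k_neq_i0; apply: sub.
by rewrite inE dotr_row_cofrow.
Qed.

Lemma norm_sum_singular_row a : row i0 a != 0 ->
  `|\sum_(X | \det X == 0) psi (mxdot a X)| <= (#|F| ^ (n.-1 * n))%:R.
Proof.
move=> al_neq0; set al := row i0 a; set S := \sum_(X | _) _.
have expand : S *+ (#|F| ^ n) =
    \sum_Y psi (mxdot a (row_upd Y 0)) * orth_sum al (cofrow Y).
  rewrite /S big_mkcond -sum_row_upd; apply: eq_bigr => Y _.
  rewrite mulr_sumr [RHS]big_mkcond; apply: eq_bigr => x _.
  rewrite det_row_upd mxdot_row_upd psiD inE.
  by case: ifP; rewrite ?mulr0.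
have n_gt0 : (0 < n)%N := leq_ltn_trans (leq0n i0) (ltn_ord i0).
have F_gt0 : (0 < #|F|)%N := ltnW (card_finNzRing_gt1 F).
have : `|S| *+ (#|F| ^ n) <= (#|F| ^ n * #|orth al| ^ n)%:R.
  rewrite -normrMn expand; apply: le_trans (ler_norm_sum _ _ _) _.
  have termwise Y : `|psi (mxdot a (row_upd Y 0)) * orth_sum al (cofrow Y)| <=
                    (#|orth al| * (Y \in rows_orth al))%:R.
    by rewrite normrM norm_psi mul1r norm_orth_sum_cofrow.
  apply: le_trans (ler_sum _ (fun Y _ => termwise Y)) _.
  have pow_orth : (#|orth al| ^ n = #|orth al| * #|orth al| ^ n.-1)%N.
    by rewrite -expnS prednK.
  rewrite -natr_sum -big_distrr ler_nat /= pow_orth mulnCA -card_rows_orth.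
  by rewrite -[#|rows_orth al|]sum1_card [X in (_ <= _ * X)%N]big_mkcond.
rewrite card_orth // -expnM natrM -[`|S| *+ _]mulr_natl ler_pM2l //.
by rewrite ltr0n expn_gt0 F_gt0.
Qed.

End RowExpansion.

Lemma norm_sum_singular a : a != 0 ->
  `|\sum_(X | \det X == 0) psi (mxdot a X)| <= (#|F| ^ (n.-1 * n))%:R.
Proof.
move=> a_neq0; have [i0 ai0_neq0] : exists i0, row i0 a != 0.
  apply/existsP; apply: contraR a_neq0 => /existsPn rows0.
  by apply/eqP/row_matrixP => i; rewrite row0; apply/eqP/negPn.
exact: norm_sum_singular_row ai0_neq0.
Qed.

End SingularCharacterSum.

Section AdditiveCharacter.

Variable R : realType.

Definition cis (x : R) : R[i] := Complex (cos x) (sin x).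

Lemma cisD x y : cis (x + y) = cis x * cis y.
Proof.
by rewrite /cis cosD sinD; apply/eqP; rewrite eq_complex /= eqxx /= addrC eqxx.
Qed.

Lemma cis_periodic x q : cis (x + pi *+ 2 *+ q) = cis x.
Proof. by rewrite /cis (periodicn (@cosD2pi R)) (periodicn (@sinD2pi R)). Qed.

Lemma norm_cis x : `|cis x| = 1.
Proof. by rewrite normc_def /= cos2Dsin2 sqrtr1. Qed.

Lemma cis_neq1 x : 0 < x <= pi -> cis x != 1.
Proof.
case/andP=> x_gt0 x_le_pi; apply/negP => /eqP/(congr1 (@complex.Re R)) /= cosx1.
have : cos x < cos 0.
  by rewrite ltr_cos // !in_itv /= ?lexx ?pi_ge0 ?x_le_pi ?(ltW x_gt0).
by rewrite cosx1 cos0 ltxx.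
Qed.

Lemma sum_Complex (I : finType) (P : pred I) (f g : I -> R) :
  \sum_(i | P i) Complex (f i) (g i) =
  Complex (\sum_(i | P i) f i) (\sum_(i | P i) g i).
Proof. by elim/big_rec3: _ => //= i x y z _ ->. Qed.

Variable p : nat.
Hypothesis p_prime : prime p.

Definition addchar (t : 'F_p) : R[i] := cis (2 * pi * (t : nat)%:R / p%:R).

Lemma addcharD s t : addchar (s + t) = addchar s * addchar t.
Proof.
have p_neq0 : (p%:R : R) != 0 by rewrite pnatr_eq0 -lt0n prime_gt0.
set m := (s + t)%N.
have val_add : (s + t : 'F_p) = (m %% p)%N :> nat.
  by rewrite /=; congr (_ %% _)%N; exact: Fp_cast.
have m_eq : (s%:R + t%:R : R) = (m %% p)%N%:R + (m %/ p)%N%:R * p%:R.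
  by rewrite -natrD -/m {1}(divn_eq m p) natrD natrM addrC.
rewrite /addchar -cisD val_add -(cis_periodic _ (m %/ p)%N).
congr cis; rewrite -mulrDl -mulrDr m_eq.
by rewrite -[pi *+ 2]mulr_natr -[_ *+ (m %/ p)%N]mulr_natr; field.
Qed.

Lemma norm_addchar t : `|addchar t| = 1.
Proof. exact: norm_cis. Qed.

Lemma addchar1_neq1 : addchar 1 != 1.
Proof.
have p_gt1 := prime_gt1 p_prime.
have p_ge2 : (2 : R) <= p%:R by rewrite (ler_nat R 2 p).
have p_gt0 : (0 : R) < p%:R by apply: lt_le_trans p_ge2.
rewrite /addchar /= Fp_cast // modn_small // mulr1.
apply: cis_neq1; rewrite divr_gt0 ?mulr_gt0 ?pi_gt0 //=.
by rewrite ler_pdivrMr // mulrC ler_pM2l // pi_gt0.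
Qed.

End AdditiveCharacter.

Lemma ler_expr_div_sqrt (R : rcfType) (x : R) n : 1 <= x -> (0 < n)%N ->
  x ^+ (n.-1 * n) <= x ^+ (n * n) / Num.sqrt x ^+ n.+1.
Proof.
move=> x_ge1 n_gt0; have x_gt0 : 0 < x by apply: lt_le_trans x_ge1.
have sqrt_ge1 : 1 <= Num.sqrt x by rewrite -[X in X <= _]sqrtr1 ler_sqrt // ltW.
rewrite ler_pdivlMr ?exprn_gt0 ?(lt_le_trans ltr01 sqrt_ge1) //.
have sqrt_pow : Num.sqrt x ^+ n.+1 <= x ^+ n.
  rewrite -[X in _ <= X ^+ n](sqr_sqrtr (ltW x_gt0)) -exprM.
  by apply: ler_weXn2l => //; rewrite mul2n -addnn -add1n leq_add2r.
apply: le_trans (ler_wpM2l (exprn_ge0 _ (ltW x_gt0)) sqrt_pow) _.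
by rewrite -exprD -mulSnr prednK.
Qed.

Theorem lemma3p5 (R : realType) (n : nat) (hn : (1 <= n)%N) :
  exists C : R, 0 < C /\
    forall (p : nat), prime p ->
    forall (a : 'M['F_p]_n), a != 0 ->
      Sp_abs R a <= C * (p%:R ^+ (n * n)) / (Num.sqrt (p%:R : R)) ^+ n.+1.
Proof.
exists 1; split=> [|p p_prime a a_neq0]; first exact: ltr01.
have S_eq : \sum_(X | \det X == 0) @addchar R p (mxdot a X) =
            Complex (Sp_re R a) (Sp_im R a).
  by rewrite /Sp_re /Sp_im -sum_Complex.
have := norm_sum_singular (@addcharD R p p_prime) (@norm_addchar R p)
                          (@addchar1_neq1 R p p_prime) a_neq0.
rewrite S_eq normc_def card_Fp // -(rmorph_nat (real_complex R)) lecR mul1r.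
move/le_trans; apply; rewrite natrX; apply: ler_expr_div_sqrt => //.
by rewrite ler1n prime_gt0.
Qed.
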